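(* Suppose the budget and utility parameters of users are drawn i.i.d. from a distribution $\mathcal{D}$ such that for each good $j$, $\mathbb{P}_{\mathcal{D}}(u_j>0)>0$, and suppose the price vectors of the revealed preference algorithm described below satisfy $\mathbf{p}^t\ge\underline{\mathbf{p}}>\mathbf{0}$ for all users $t\in[n]$. Then, when the step size is $\gamma=\gamma_t=\bar D/\sqrt n$ for some $0<\bar D\le 1$, the price vectors are bounded: $\mathbf{p}^t\le\bar{\mathbf{p}}$ for all $t\in[n]$ for some constant vector $\bar{\mathbf{p}}\ge\underline{\mathbf{p}}$.
   Context: Online Fisher market: $m$ divisible goods, good $j$ with capacity $c_j=nd_j$, $\mathbf{d}>\mathbf{0}$; $n$ users with $(w_t,\mathbf{u}_t)$ i.i.d. from $\mathcal{D}$, budgets $w_t\in[\underline w,\bar w]$ with $\underline w>0$, utilities bounded and nonnegative. Given $\mathbf{p}^t$, user $t$ consumes an optimal solution $\mathbf{x}_t$ of $\max\mathbf{u}_t^\top\mathbf{x}$ s.t. $(\mathbf{p}^t)^\top\mathbf{x}\le w_t$, $\mathbf{x}\ge\mathbf{0}$. Revealed preference algorithm: initialize $\mathbf{p}^1>\mathbf{0}$; $\mathbf{p}^{t+1}=\mathbf{p}^t-\gamma_t(\mathbf{d}-\mathbf{x}_t)$. ''Constant'' means independent of $n$ and $t$. *)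

From HB Require Import structures.
From mathcomp Require Import all_boot all_order all_algebra.
From mathcomp Require Import all_classical all_reals all_analysis.
Set Implicit Arguments. Unset Strict Implicit. Unset Printing Implicit Defensive.
Import Order.TTheory GRing.Theory Num.Theory.
Local Open Scope classical_set_scope.
Local Open Scope ring_scope.

Definition vle (R : realType) (m : nat) (a b : 'I_m -> R) : Prop :=
  forall j, a j <= b j.

Definition dotv (R : realType) (m : nat) (a b : 'I_m -> R) : R :=
  \sum_(j < m) a j * b j.

Definition budget_feasible (R : realType) (m : nat) (p : 'I_m -> R) (w : R)
  (x : 'I_m -> R) : Prop :=
  (forall j, 0 <= x j) /\ dotv p x <= w.

Definition is_demand (R : realType) (m : nat) (p : 'I_m -> R) (w : R)
  (u x : 'I_m -> R) : Prop :=
  budget_feasible p w x /\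
  forall y, budget_feasible p w y -> dotv u y <= dotv u x.

Definition user_event (R : realType) (m : nat) (d : measure_display)
  (Omega : measurableType d) (W : Omega -> R) (U : Omega -> 'I_m -> R)
  (A : set R) (B : 'I_m -> set R) : set Omega :=
  [set om | A (W om) /\ forall j, B j (U om j)].

(* The users (W t, U t), t : nat, are i.i.d. random elements of R x R^m:
   measurable, mutually independent (product rule over every finite family of
   measurable rectangles, which form a generating pi-system), and identically
   distributed. *)
Definition users_iid (R : realType) (m : nat) (d : measure_display)
  (Omega : measurableType d) (P : probability Omega R)
  (W : nat -> Omega -> R) (U : nat -> Omega -> 'I_m -> R) : Prop :=
  [/\ (forall t, measurable_fun setT (W t)),
      (forall t j, measurable_fun setT (fun om => U t om j)),
      (forall (S : seq nat) (A : nat -> set R) (B : nat -> 'I_m -> set R),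
          uniq S -> (forall t, measurable (A t)) ->
          (forall t j, measurable (B t j)) ->
          P [set om | forall t, t \in S -> user_event (W t) (U t) (A t) (B t) om]
          = \big[*%E/1%E]_(t <- S) P (user_event (W t) (U t) (A t) (B t))) &
      (forall s t (A : set R) (B : 'I_m -> set R),
          measurable A -> (forall j, measurable (B j)) ->
          P (user_event (W s) (U s) A B) = P (user_event (W t) (U t) A B))].

(** The lower bound p^t >= plo is what keeps prices from drifting upwards.
    Fix a good j. If p_j >= w/d_j, then the budget p_j x_j <= w forces
    x_j <= d_j, so the update (with step size at most 1) does not raise p_j.
    If p_j < w/d_j, then x_j <= w/plo_j, so one step raises p_j by at most
    w/plo_j. Hence max(p^1_j, w/d_j + w/plo_j) is never exceeded. *)
From HB Require Import structures.
From mathcomp Require Import all_boot all_order all_algebra.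
From mathcomp Require Import all_classical all_reals all_analysis.
From mathcomp Require Import lra.
Import Order.TTheory GRing.Theory Num.Theory.
Set Implicit Arguments. Unset Strict Implicit. Unset Printing Implicit Defensive.
Local Open Scope classical_set_scope.
Local Open Scope ring_scope.

Lemma budget_feasible_coord_le (R : realType) (m : nat) (p : 'I_m -> R)
    (w : R) (x : 'I_m -> R) (j : 'I_m) :
  (forall k, 0 <= p k) -> budget_feasible p w x -> p j * x j <= w.
Proof.
move=> p_ge0 [x_ge0 spend_le]; apply: le_trans spend_le.
rewrite /dotv (bigD1 j) //= lerDl; apply: sumr_ge0 => k _.
exact: mulr_ge0.
Qed.

Lemma price_step_le (R : realFieldType) (p x d g w plo B : R) :
  0 < d -> 0 < plo -> plo <= p -> 0 <= x -> p * x <= w ->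
  0 <= g <= 1 -> w / d + w / plo <= B -> p <= B ->
  p - g * (d - x) <= B.
Proof.
move=> d_gt0 plo_gt0 plo_le_p x_ge0 spend_le /andP[g_ge0 g_le1] target_le p_le.
have p_gt0 : 0 < p by exact: lt_le_trans plo_le_p.
have w_floor : w / plo * plo = w by rewrite mulfVK // gt_eqF.
have w_target : w / d * d = w by rewrite mulfVK // gt_eqF.
have [target_le_p | p_lt_target] := leP (w / d) p.
- have x_le_d : x <= d.
    rewrite leNgt; apply/negP => d_lt_x.
    have : p * d < p * x by rewrite ltr_pM2l.
    nra.
  nra.
- have x_le_floor : x <= w / plo.
    have : plo * x <= p * x by exact: ler_wpM2r.
    nra.
  nra.
Qed.

Lemma step_size_ge0_le1 (R : realType) (c : R) (n : nat) :
  0 < c <= 1 -> (0 < n)%N -> 0 <= c / Num.sqrt n%:R <= 1.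
Proof.
move=> /andP[c_gt0 c_le1] n_gt0.
have sqrt_ge1 : 1 <= Num.sqrt (n%:R : R).
  by rewrite -[leLHS]sqrtr1 ler_sqrt ?ler0n // ler1n.
have sqrt_gt0 : 0 < Num.sqrt (n%:R : R) by exact: lt_le_trans sqrt_ge1.
apply/andP; split; first by rewrite divr_ge0 // ltW.
by rewrite ler_pdivrMr // mul1r (le_trans c_le1).
Qed.

Lemma nat_ind_from1_upto (Q : nat -> Prop) (n : nat) :
  Q 1%N -> (forall t, (1 <= t < n)%N -> Q t -> Q t.+1) ->
  forall t, (1 <= t <= n)%N -> Q t.
Proof.
move=> Q1 QS; elim=> [//|t IH] /andP[_ t_lt_n].
case: t IH t_lt_n => [|t] IH t_lt_n; first exact: Q1.
by apply: QS; [rewrite /= t_lt_n | apply: IH; rewrite /= ltnW].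
Qed.

Theorem lemma9 (R : realType) (m : nat) (dsp : measure_display)
  (Omega : measurableType dsp) (P : probability Omega R)
  (W : nat -> Omega -> R) (U : nat -> Omega -> 'I_m -> R)
  (dv : 'I_m -> R) (wlo whi ubar : R) (p1 plo : 'I_m -> R) (Dbar : R) :
  (forall j, 0 < dv j) ->
  0 < wlo ->
  (forall t om, wlo <= W t om <= whi) ->
  (forall t om j, 0 <= U t om j <= ubar) ->
  users_iid P W U ->
  (forall j, (0%E < P [set om | (0 < U 1%N om j)%R])%E) ->
  (forall j, 0 < p1 j) ->
  (forall j, 0 < plo j) ->
  0 < Dbar <= 1 ->
  exists pbar : 'I_m -> R,
    vle plo pbar /\
    forall (n : nat) (p x : nat -> Omega -> 'I_m -> R),
      (0 < n)%N ->
      (forall om, p 1%N om = p1) ->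
      (forall t om, (1 <= t <= n)%N -> is_demand (p t om) (W t om) (U t om) (x t om)) ->
      (forall t om j, (1 <= t <= n)%N ->
          p t.+1 om j = p t om j - (Dbar / Num.sqrt n%:R) * (dv j - x t om j)) ->
      forall om,
        (forall t, (1 <= t <= n)%N -> vle plo (p t om)) ->
        forall t, (1 <= t <= n)%N -> vle (p t om) pbar.
Proof.
move=> dv_gt0 _ W_bound _ _ _ _ plo_gt0 Dbar_bound.
exists (fun j => Num.max (Num.max (p1 j) (plo j)) (whi / dv j + whi / plo j)).
split=> [j | n p x n_gt0 p_init demand update om p_ge_plo].
  by rewrite !le_max lexx orbT.
have step_size := step_size_ge0_le1 Dbar_bound n_gt0.
apply: nat_ind_from1_upto => [j | t /andP[t_ge1 t_lt_n] IH j].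
  by rewrite p_init !le_max lexx.
have t_range : (1 <= t <= n)%N by rewrite t_ge1 ltnW.
have [[x_ge0 x_budget] _] := demand t om t_range.
have p_ge0 k : 0 <= p t om k by exact: le_trans (ltW (plo_gt0 k)) (p_ge_plo t t_range k).
have spend_le : p t om j * x t om j <= whi.
  apply: le_trans (budget_feasible_coord_le j p_ge0 (conj x_ge0 x_budget)) _.
  by case/andP: (W_bound t om).
rewrite update //; apply: (price_step_le (dv_gt0 j) (plo_gt0 j)
  (p_ge_plo t t_range j) (x_ge0 j) spend_le step_size _ (IH j)).
by rewrite le_max lexx orbT.
Qed.
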